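(* Let $\mathbf{G}=(\mathcal{V},\mathcal{E})$ be a strongly connected directed graph on $\mathcal{V}=\{1,\dots,m\}$ with diameter $\delta(\mathbf{G})$, let $a>0$, and let each node $i$ hold a private input $x_i\in[0,a)$. If the TITAN algorithm (described in the context) is run with parameters $T\ge\delta(\mathbf{G})$ and a positive integer $k\le m$, then it terminates after $T\lceil m/k\rceil$ rounds of the recovery phase and every node outputs exactly $\bar{x}=\frac{1}{m}\sum_{i=1}^m x_i$.
   Context: For $a'>0$ and real $y$, $\mathrm{mod}(y,a')=y-pa'$, where $p$ is the unique integer with $y-pa'\in[0,a')$. $\mathcal{N}_i^{in}$ and $\mathcal{N}_i^{out}$ denote the in- and out-neighbors of node $i$; $\delta(\mathbf{G})$ is the directed diameter. Communication is synchronous and reliable. TITAN algorithm: (1) Obfuscation: each node $i$ draws, for every out-neighbor $j$, an independent random number $r_{ij}$ uniform on $[0,ma)$ and sends it to $j$; node $i$ computes $t_i=\mathrm{mod}\big(\sum_{j\in\mathcal{N}_i^{in}} r_{ji}-\sum_{j\in\mathcal{N}_i^{out}} r_{ij},\, ma\big)$ and the perturbed input $\tilde{x}_i=\mathrm{mod}(x_i+t_i,ma)$. (2) Distributed recovery: the nodes run the Top-$k$ consensus primitive $\lceil m/k\rceil$ times in succession on the pairs $(\tilde{x}_i,i)$, each run using $T$ rounds and excluding the pairs already recovered in previous runs; each node stores the recovered pairs. The Top-$k$ primitive: each node keeps length-$k$ lists $L_i,\ell_i$ of values and identifiers, initialized with its own (not yet recovered) pair and empty entries; in each of $T$ rounds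 every node sends its lists to its out-neighbors and replaces its lists by the (up to) $k$ largest value–identifier pairs among its own and received ones, in decreasing order of value with ties broken in favor of larger identifier. (3) Output: each node $i$, having recovered values $r_i[1],\dots,r_i[m]$, outputs $\frac{1}{m}\mathrm{mod}\big(\sum_{l=1}^m r_i[l],ma\big)$. *)

From HB Require Import structures.
From mathcomp Require Import all_boot all_order all_algebra.
From mathcomp Require Import reals.
Set Implicit Arguments.
Unset Strict Implicit.
Unset Printing Implicit Defensive.
Import Order.TTheory GRing.Theory Num.Theory.
Local Open Scope ring_scope.

Section Titan.
Variable R : realType.

Definition rmod (y a' : R) : R := y - (Num.floor (y / a'))%:~R * a'.

Variable m : nat.
(* Directed graph on nodes 'I_m : E i j  <=>  (i, j) is an edge, i.e.
   j is an out-neighbor of i and i is an in-neighbor of j. *)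
Variable E : rel 'I_m.

Definition strongly_connected : Prop := forall i j : 'I_m, connect E i j.

Fixpoint reach (n : nat) (i : 'I_m) : {set 'I_m} :=
  match n with
  | 0 => [set i]
  | n'.+1 => reach n' i :|: [set y | [exists x in reach n' i, E x y]]
  end.

(* directed distance from i to j (shortest walk length; distances in a
   strongly connected graph on m nodes are < m) *)
Definition dist (i j : 'I_m) : nat := find (fun n => j \in reach n i) (iota 0 m).

Definition diameter : nat := \max_(i : 'I_m) \max_(j : 'I_m) dist i j.

Definition pair := (R * 'I_m)%type.

Definition pair_before (p q : pair) : bool :=
  (q.1 < p.1) || ((p.1 == q.1) && (q.2 <= p.2)%N).

Definition topk (k : nat) (s : seq pair) : seq pair :=
  take k (sort pair_before (undup s)).

Definition topk_round (k : nat) (L : 'I_m -> seq pair) : 'I_m -> seq pair :=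
  fun i => topk k (L i ++ flatten [seq L j | j <- enum 'I_m & E j i]).

Definition topk_run (k T : nat) (L0 : 'I_m -> seq pair) : 'I_m -> seq pair :=
  iter T (topk_round k) L0.

Definition recovery_step (k T : nat) (xt : 'I_m -> R)
    (S : 'I_m -> seq pair) : 'I_m -> seq pair :=
  let L0 := fun i => if (xt i, i) \in S i then [::] else [:: (xt i, i)] in
  let L := topk_run k T L0 in
  fun i => S i ++ L i.

Definition ceil_div (n k : nat) : nat := (n + k.-1) %/ k.

Definition recovery_rounds (k T : nat) : nat := T * ceil_div m k.

Definition recovered (k T : nat) (xt : 'I_m -> R) : 'I_m -> seq pair :=
  iter (ceil_div m k) (recovery_step k T xt) (fun _ => [::]).

(* obfuscation phase; r i j is the random number sent by i to j (edge i->j) *)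
Definition obf_t (a : R) (r : 'I_m -> 'I_m -> R) (i : 'I_m) : R :=
  rmod (\sum_(j < m | E j i) r j i - \sum_(j < m | E i j) r i j) (m%:R * a).

Definition perturbed (a : R) (x : 'I_m -> R) (r : 'I_m -> 'I_m -> R)
    (i : 'I_m) : R :=
  rmod (x i + obf_t a r i) (m%:R * a).

Definition titan_output (a : R) (k T : nat) (x : 'I_m -> R)
    (r : 'I_m -> 'I_m -> R) (i : 'I_m) : R :=
  (m%:R)^-1 *
    rmod (\sum_(p <- recovered k T (perturbed a x r) i) p.1) (m%:R * a).

End Titan.

From HB Require Import structures.
From mathcomp Require Import all_boot all_order all_algebra.
From mathcomp Require Import reals ring zify.
Import Order.TTheory GRing.Theory Num.Theory.
Local Open Scope ring_scope.

(* After T rounds of the Top-k primitive every node holds the k largest pairs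
   among those of the nodes reaching it within T steps; as T is at least the
   diameter, this is the global top k.  Each run thus delivers the next k pairs
   of the decreasingly sorted list of all perturbed pairs, and after
   ceil(m/k) runs every node holds all m perturbed inputs.  Each mask t_i is
   the net flow of the r's at node i reduced modulo m a, and net flows sum to
   zero, so the perturbed inputs sum to sum_i x_i modulo m a; since
   0 <= sum_i x_i < m a, the final reduction returns sum_i x_i exactly. *)

Set Implicit Arguments.
Unset Strict Implicit.
Unset Printing Implicit Defensive.

Lemma mem_take_filter (T : eqType) (p : pred T) (s : seq T) n z :
  z \in take n s -> p z -> z \in take n (filter p s).
Proof.
elim: s n => [|y s IHs] [|n] //=; rewrite in_cons.
case: eqP => [-> _ ->|_ /= z_s pz]; first exact: mem_head.
case: (p y); first by rewrite in_cons IHs ?orbT.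
by move: (IHs n z_s pz); rewrite -(take_takel _ (leqnSn n)) => /mem_take.
Qed.

Lemma filter_notin_take (T : eqType) (s : seq T) n :
  uniq s -> [seq z <- s | z \notin take n s] = drop n s.
Proof.
rewrite -{1}(cat_take_drop n s) cat_uniq => /and3P[_ disj _].
rewrite -[X in filter _ X](cat_take_drop n s) filter_cat.
rewrite (@eq_in_filter _ _ pred0) => [|z ->] //; rewrite filter_pred0 /=.
rewrite (@eq_in_filter _ _ predT) ?filter_predT // => z z_drop /=.
by apply/negP => z_take; move/hasP: disj; apply; exists z.
Qed.

Section SortedPrefix.
Variables (T : eqType) (le : rel T).
Hypotheses (le_total : total le) (le_trans : transitive le).
Hypothesis le_anti : antisymmetric le.

Local Notation top k s := (take k (sort le (undup s))).

Lemma sort_undup_subset (s s' : seq T) : {subset s' <= s} ->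
  sort le (undup s') = [seq z <- sort le (undup s) | z \in s'].
Proof.
move=> s'_s; apply: (sorted_eq le_trans le_anti).
- exact: sort_sorted.
- exact: sorted_filter (sort_sorted le_total _).
apply: uniq_perm; rewrite ?filter_uniq ?sort_uniq ?undup_uniq // => z.
rewrite mem_filter !mem_sort !mem_undup.
by case z_s': (z \in s') => /=; rewrite ?s'_s.
Qed.

Lemma top_subset_eq k (s s' : seq T) : {subset s' <= s} ->
  {subset top k s <= s'} -> top k s' = top k s.
Proof.
move=> s'_s top_s'; rewrite (sort_undup_subset s'_s).
rewrite -{1}(cat_take_drop k (sort le (undup s))) filter_cat.
have /all_filterP-> : all (mem s') (top k s) by apply/allP.
case: (leqP (size (sort le (undup s))) k) => [size_le|size_gt].
  by rewrite drop_oversize //= cats0 take_takel.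
by rewrite take_size_cat // size_take size_gt.
Qed.

Lemma top_subset_mem k (s s' : seq T) z : {subset s' <= s} ->
  z \in top k s -> z \in s' -> z \in top k s'.
Proof. by move=> s'_s; rewrite (sort_undup_subset s'_s); apply: mem_take_filter. Qed.

Lemma top_eq_mem k (s s' : seq T) : s =i s' -> top k s = top k s'.
Proof.
move=> eq_s; apply: top_subset_eq => z; first by rewrite eq_s.
by move/mem_take; rewrite mem_sort mem_undup eq_s.
Qed.

Lemma top_drop k n (s s' : seq T) :
  s' =i [seq z <- s | z \notin take n (sort le (undup s))] ->
  top k s' = take k (drop n (sort le (undup s))).
Proof.
move=> eq_s'; have s'_s : {subset s' <= s}.
  by move=> z; rewrite eq_s' mem_filter => /andP[].
rewrite (sort_undup_subset s'_s) -filter_notin_take ?sort_uniq ?undup_uniq //.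
congr take; apply: eq_in_filter => z.
by rewrite mem_sort mem_undup eq_s' mem_filter => ->; rewrite andbT.
Qed.

End SortedPrefix.

Section PairOrder.
Variables (R : realType) (m : nat).

Lemma mem_topk k (s : seq (pair R m)) : {subset topk k s <= s}.
Proof. by move=> z /mem_take; rewrite mem_sort mem_undup. Qed.

Lemma pair_before_total : total (@pair_before R m).
Proof.
move=> [p1 p2] [q1 q2]; rewrite /pair_before /=.
by case: (ltgtP p1 q1) => //= _; rewrite leq_total.
Qed.

Lemma pair_before_trans : transitive (@pair_before R m).
Proof.
move=> [q1 q2] [p1 p2] [s1 s2]; rewrite /pair_before /=.
case/orP=> [lt_pq|/andP[/eqP eq_qp le_pq]]; case/orP=> [lt_sp|/andP[/eqP eq_ps le_sp]].
- by rewrite (lt_trans lt_sp lt_pq).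
- by rewrite -eq_ps lt_pq.
- by rewrite eq_qp lt_sp.
- by rewrite eq_qp eq_ps eqxx (leq_trans le_sp le_pq) orbT.
Qed.

Lemma pair_before_anti : antisymmetric (@pair_before R m).
Proof.
move=> [p1 p2] [q1 q2]; rewrite /pair_before /= => /andP[].
case/orP=> [lt_qp|/andP[/eqP eq_pq le_qp]]; case/orP=> [lt_pq|/andP[/eqP eq_qp le_pq]].
- by move: (lt_trans lt_pq lt_qp); rewrite ltxx.
- by move: lt_qp; rewrite eq_qp ltxx.
- by move: lt_pq; rewrite eq_pq ltxx.
- by rewrite eq_pq; congr (_, _); apply/val_inj/eqP; rewrite eqn_leq le_qp le_pq.
Qed.

Lemma topk_subset_eq k (s s' : seq (pair R m)) : {subset s' <= s} ->
  {subset topk k s <= s'} -> topk k s' = topk k s.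
Proof.
exact: (@top_subset_eq _ _ pair_before_total pair_before_trans pair_before_anti k s s').
Qed.

Lemma topk_subset_mem k (s s' : seq (pair R m)) z : {subset s' <= s} ->
  z \in topk k s -> z \in s' -> z \in topk k s'.
Proof.
exact: (@top_subset_mem _ _ pair_before_total pair_before_trans pair_before_anti k s s').
Qed.

Lemma topk_eq_mem k (s s' : seq (pair R m)) : s =i s' -> topk k s = topk k s'.
Proof.
exact: (@top_eq_mem _ _ pair_before_total pair_before_trans pair_before_anti k s s').
Qed.

Lemma topk_drop k n (s s' : seq (pair R m)) :
  s' =i [seq z <- s | z \notin take n (sort (@pair_before R m) (undup s))] ->
  topk k s' = take k (drop n (sort (@pair_before R m) (undup s))).
Proof.
exact: (@top_drop _ _ pair_before_total pair_before_trans pair_before_anti k n s s').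
Qed.

End PairOrder.

Section Reach.
Variables (m : nat) (E : rel 'I_m).

Lemma reachS n i j :
  (j \in reach E n.+1 i) = (j \in reach E n i) || [exists y in reach E n i, E y j].
Proof. by rewrite /= in_setU in_set. Qed.

Lemma reach_mono n n' i : (n <= n')%N -> {subset reach E n i <= reach E n' i}.
Proof.
move=> /subnK <-; elim: (n' - n)%N => [|d IHd] //= j j_reach.
by rewrite in_setU IHd.
Qed.

Lemma path_last_reach i p : path E i p -> last i p \in reach E (size p) i.
Proof.
elim/last_ind: p => [|p z IHp]; first by rewrite /= in_set1.
rewrite rcons_path last_rcons size_rcons reachS => /andP[/IHp last_reach E_last].
by apply/orP; right; apply/existsP; exists (last i p); rewrite last_reach.
Qed.

Lemma connect_reach i j : connect E i j -> exists2 n, (n < m)%N & j \in reach E n i.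
Proof.
case/connectP=> p p_path ->; case: (shortenP p_path) => p' p'_path p'_uniq _.
exists (size p'); last exact: path_last_reach.
by have := uniq_leq_size p'_uniq (fun z _ => mem_enum 'I_m z); rewrite size_enum_ord.
Qed.

Lemma reach_diameter T : strongly_connected E -> (diameter E <= T)%N ->
  forall i j, j \in reach E T i.
Proof.
move=> conn diam_T i j.
have has_reach : has (fun n => j \in reach E n i) (iota 0 m).
  case: (connect_reach (conn i j)) => n lt_nm j_reach.
  by apply/hasP; exists n; rewrite ?mem_iota.
have := nth_find 0%N has_reach.
rewrite nth_iota ?add0n; last by move: has_reach; rewrite has_find size_iota.
apply: reach_mono; apply: leq_trans diam_T; rewrite /diameter.
apply: leq_trans (leq_bigmax i).
exact: (leq_bigmax (F := fun j => dist E i j) j).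
Qed.

End Reach.

Section TopkRun.
Variables (R : realType) (m : nat) (E : rel 'I_m) (k : nat).
Hypothesis k_gt0 : (0 < k)%N.
Variable L0 : 'I_m -> seq (pair R m).
Hypothesis size_L0 : forall i, (size (L0 i) <= 1)%N.

Definition gathered n i := flatten [seq L0 j | j <- enum 'I_m & i \in reach E n j].

Lemma gatheredP n i z :
  reflect (exists2 j, i \in reach E n j & z \in L0 j) (z \in gathered n i).
Proof.
apply: (iffP flatten_mapP) => [[j]|[j i_reach z_j]].
  by rewrite mem_filter => /andP[i_reach _]; exists j.
by exists j; rewrite // mem_filter i_reach mem_enum.
Qed.

Lemma gathered_succ n i : {subset gathered n i <= gathered n.+1 i}.
Proof.
move=> z /gatheredP[j i_reach z_j]; apply/gatheredP; exists j => //.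
exact: reach_mono i_reach.
Qed.

Lemma gathered_edge n i i' : E i' i -> {subset gathered n i' <= gathered n.+1 i}.
Proof.
move=> E_i'i z /gatheredP[j i'_reach z_j]; apply/gatheredP; exists j => //.
by rewrite reachS; apply/orP; right; apply/existsP; exists i'; rewrite i'_reach.
Qed.

Lemma topk_run0 i : topk_run E k 0 L0 i = topk k (gathered 0 i).
Proof.
have -> : topk k (gathered 0 i) = topk k (L0 i).
  apply: topk_eq_mem => z; apply/gatheredP/idP => [[j]|z_i].
    by rewrite /= in_set1 => /eqP->.
  by exists i; rewrite /= ?in_set1.
rewrite /topk_run /topk /=; case: (L0 i) (size_L0 i) => [|p []] // _; by case: k k_gt0.
Qed.

(* The top k of a union is the top k of the union of the top k's. *)
Lemma topk_run_gathered n i : topk_run E k n L0 i = topk k (gathered n i).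
Proof.
elim: n i => [|n IHn] i; first exact: topk_run0.
rewrite /topk_run iterS -/(topk_run E k n L0) /topk_round IHn.
apply: topk_subset_eq => z.
  rewrite mem_cat => /orP[/mem_topk/gathered_succ //|/flatten_mapP[i']].
  by rewrite mem_filter mem_enum andbT IHn => E_i'i /mem_topk/gathered_edge; apply.
move=> z_top; have /gatheredP[j] := mem_topk z_top.
rewrite reachS mem_cat => /orP[i_reach|/existsP[i' /andP[i'_reach E_i'i]]] z_j.
  apply/orP; left; apply: topk_subset_mem z_top _.
    exact: gathered_succ.
  by apply/gatheredP; exists j.
apply/orP; right; apply/flatten_mapP; exists i'.
  by rewrite mem_filter E_i'i mem_enum.
rewrite IHn; apply: topk_subset_mem z_top _; first exact: gathered_edge.
by apply/gatheredP; exists j.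
Qed.

Lemma topk_run_diameter T : strongly_connected E -> (diameter E <= T)%N ->
  forall i, topk_run E k T L0 i = topk k (flatten [seq L0 j | j <- enum 'I_m]).
Proof.
move=> conn diam_T i; rewrite topk_run_gathered; apply: topk_eq_mem => z.
apply/gatheredP/flatten_mapP => [[j _ z_j]|[j _ z_j]]; exists j => //.
  by rewrite mem_enum.
exact: reach_diameter.
Qed.

End TopkRun.

Section Recovery.
Variables (R : realType) (m : nat) (E : rel 'I_m) (k T : nat).
Hypotheses (k_gt0 : (0 < k)%N) (conn : strongly_connected E).
Hypothesis diam_T : (diameter E <= T)%N.
Variable xt : 'I_m -> R.

Definition all_pairs : seq (pair R m) := [seq (xt j, j) | j <- enum 'I_m].

Definition ranked := sort (@pair_before R m) (undup all_pairs).

Lemma all_pairs_uniq : uniq all_pairs.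
Proof. by rewrite map_inj_uniq ?enum_uniq // => j j' /(congr1 snd). Qed.

Lemma perm_ranked : perm_eq ranked all_pairs.
Proof. by rewrite perm_sort undup_id ?all_pairs_uniq. Qed.

Lemma size_ranked : size ranked = m.
Proof. by rewrite (perm_size perm_ranked) size_map size_enum_ord. Qed.

Lemma recovery_iter n i :
  iter n (recovery_step E k T xt) (fun=> [::]) i = take (n * k) ranked.
Proof.
elim: n i => [|n IHn] i; first by rewrite take0.
rewrite iterS; move: (iter n _ _) IHn => S S_eq.
rewrite /recovery_step S_eq topk_run_diameter //; last by move=> j; case: ifP.
rewrite (@topk_drop _ _ k (n * k) all_pairs) -/ranked.
  by rewrite -takeD mulSn addnC.
move=> z; rewrite mem_filter; apply/flatten_mapP/andP.
  case=> j _; rewrite S_eq; case: ifP => //= z_new /[!inE] /eqP->.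
  by rewrite z_new map_f ?mem_enum.
case=> /[swap] /mapP[j _ ->] z_new; exists j; rewrite ?mem_enum //.
by rewrite S_eq (negbTE z_new) mem_head.
Qed.

Lemma leq_ceil_div_mul : (m <= ceil_div m k * k)%N.
Proof.
rewrite /ceil_div; have := divn_eq (m + k.-1) k; have := ltn_pmod (m + k.-1) k_gt0.
lia.
Qed.

Lemma recovered_sum i : \sum_(p <- recovered E k T xt i) p.1 = \sum_(j < m) xt j.
Proof.
rewrite /recovered recovery_iter take_oversize ?size_ranked ?leq_ceil_div_mul //.
by rewrite (perm_big _ perm_ranked) big_map big_enum.
Qed.

End Recovery.

Section Rmod.
Variables (R : realType) (M : R).
Hypothesis M_gt0 : 0 < M.

Lemma rmodDz y (z : int) : rmod (y + z%:~R * M) M = rmod y M.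
Proof.
rewrite /rmod mulrDl mulfK ?gt_eqF // floorDrz ?intr_int // intrKfloor intrD.
ring.
Qed.

Lemma rmod_id y : 0 <= y < M -> rmod y M = y.
Proof.
case/andP=> y_ge0 y_ltM; rewrite /rmod (@floor_def _ _ 0) ?mul0r ?subr0 //.
by rewrite add0r /= divr_ge0 ?(ltW M_gt0) //= ltr_pdivrMr // mul1r.
Qed.

Lemma rmodD_sum_rmod (I : Type) y (s : seq I) (F : I -> R) :
  rmod (y + \sum_(i <- s) rmod (F i) M) M = rmod (y + \sum_(i <- s) F i) M.
Proof.
have -> : \sum_(i <- s) rmod (F i) M =
    \sum_(i <- s) F i + (- \sum_(i <- s) Num.floor (F i / M))%:~R * M.
  by rewrite /rmod big_split sumrN mulrNz mulNr -mulr_suml -mulrz_sumr.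
by rewrite addrA rmodDz.
Qed.

End Rmod.

Lemma sum_netflow_eq0 (V : zmodType) (I : finType) (E : rel I) (f : I -> I -> V) :
  \sum_i (\sum_(j | E j i) f j i - \sum_(j | E i j) f i j) = 0.
Proof. by rewrite sumrB (exchange_big_dep xpredT) //= subrr. Qed.

Lemma rmod_sum_perturbed (R : realType) m (E : rel 'I_m) (a : R) x r :
  0 < m%:R * a ->
  rmod (\sum_j perturbed E a x r j) (m%:R * a) = rmod (\sum_j x j) (m%:R * a).
Proof.
move=> M_gt0; rewrite /perturbed -[X in rmod X _ = _]add0r rmodD_sum_rmod //.
by rewrite add0r big_split /= /obf_t rmodD_sum_rmod // sum_netflow_eq0 addr0.
Qed.

Theorem theorem2 (R : realType) (m : nat) (E : rel 'I_m) (a : R)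
    (x : 'I_m -> R) (r : 'I_m -> 'I_m -> R) (k T : nat) :
  strongly_connected E ->
  0 < a ->
  (forall i, 0 <= x i < a) ->
  (forall i j, E i j -> 0 <= r i j < m%:R * a) ->
  (diameter E <= T)%N ->
  (0 < k <= m)%N ->
  forall i : 'I_m, titan_output E a k T x r i = (m%:R)^-1 * \sum_(j < m) x j.
Proof.
(* The range of the r's only matters for privacy, not for correctness. *)
move=> conn a_gt0 x_range _ diam_T /andP[k_gt0 k_le_m] i.
have m_gt0 : (0 < m)%N := leq_trans k_gt0 k_le_m.
have M_gt0 : 0 < m%:R * a by rewrite mulr_gt0 ?ltr0n.
rewrite /titan_output recovered_sum // rmod_sum_perturbed // rmod_id //.
rewrite sumr_ge0 => [|j _]; last by case/andP: (x_range j).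
have -> : m%:R * a = \sum_(j < m) a by rewrite sumr_const card_ord mulr_natl.
apply: ltr_sum => [|j _]; last by case/andP: (x_range j).
by apply/hasP; exists (Ordinal m_gt0); rewrite ?mem_index_enum.
Qed.
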